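(* Let $\mathscr{H}$ be a complex Hilbert space, let $X,Y\in\mathbb{B}(\mathscr{H})$ and let $0\leq\alpha\leq1$, $0\leq\beta\leq1$. Then for every $x\in\mathscr{H}$ with $\|x\|=1$, $$|\langle Xx,x\rangle\langle Yx,x\rangle|\leq\frac{1}{4}\left\|\alpha|X|^2+(1-\alpha)|X^*|^2+\beta|Y|^2+(1-\beta)|Y^*|^2\right\|+\frac{1}{8}\left\||X|^2+|Y^*|^2\right\|+\frac{1}{4}\,w(YX).$$
   Context: $\mathbb{B}(\mathscr{H})$ denotes the algebra of bounded linear operators on $\mathscr{H}$; $\|\cdot\|$ is the operator norm. For $T\in\mathbb{B}(\mathscr{H})$, $|T|=(T^*T)^{1/2}$, and $w(T)=\sup\{|\langle Tx,x\rangle|: \|x\|=1\}$ is the numerical radius. *)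

From HB Require Import structures.
From mathcomp Require Import all_boot all_order all_algebra.
From mathcomp Require Import all_classical all_reals.
From mathcomp Require Export complex.
Set Implicit Arguments. Unset Strict Implicit. Unset Printing Implicit Defensive.
Import Order.TTheory GRing.Theory Num.Theory.
Local Open Scope ring_scope.
Local Open Scope classical_set_scope.

Section Hilbert.
Variable R : realType.
Local Notation C := (R[i]).
Variable V : lmodType C.

Definition is_inner_product (ip : V -> V -> C) : Prop :=
  [/\ forall (a : C) (x y z : V), ip (a *: x + y) z = a * ip x z + ip y z,
      forall x y : V, ip y x = (ip x y)^*,
      forall x : V, 0 <= ip x x
    & forall x : V, ip x x = 0 -> x = 0].

Definition ipnorm (ip : V -> V -> C) (x : V) : R :=
  Num.sqrt (complex.Re (ip x x)).

Definition ip_complete (ip : V -> V -> C) : Prop :=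
  forall u : nat -> V,
    (forall e : R, 0 < e -> exists N : nat, forall m n : nat,
        (N <= m)%N -> (N <= n)%N -> ipnorm ip (u m - u n) < e) ->
    exists l : V, forall e : R, 0 < e -> exists N : nat, forall n : nat,
        (N <= n)%N -> ipnorm ip (u n - l) < e.

Definition is_hilbert (ip : V -> V -> C) : Prop :=
  is_inner_product ip /\ ip_complete ip.

Definition is_bounded_op (ip : V -> V -> C) (T : V -> V) : Prop :=
  linear T /\ exists M : R, forall x : V, ipnorm ip (T x) <= M * ipnorm ip x.

Definition is_adjoint (ip : V -> V -> C) (T Ts : V -> V) : Prop :=
  forall x y : V, ip (T x) y = ip x (Ts y).

Definition opnorm (ip : V -> V -> C) (T : V -> V) : R :=
  sup [set ipnorm ip (T x) | x in [set x : V | ipnorm ip x <= 1]].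

Definition numrad (ip : V -> V -> C) (T : V -> V) : R :=
  sup [set complex.Re `|ip (T x) x| | x in [set x : V | ipnorm ip x = 1]].

End Hilbert.

From HB Require Import structures.
From mathcomp Require Import all_boot all_order all_algebra.
From mathcomp Require Import all_classical all_reals.
From mathcomp Require Import complex.
From mathcomp Require Import ring lra.
Import Order.TTheory GRing.Theory Num.Theory.
Local Open Scope ring_scope.
Set Implicit Arguments.
Unset Strict Implicit.

(* Write p = |<Xx,x>| and q = |<Yx,x>|, and split  pq = pq/2 + pq/2.
   - By Cauchy-Schwarz, p <= ||Xx|| and p <= ||X*x||; since
     <|X|^2 x,x> = ||Xx||^2 and <|X*|^2 x,x> = ||X*x||^2, any convex
     combination gives p^2 <= <(a|X|^2 + (1-a)|X*|^2)x,x>, and likewise for q.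
     Hence 2pq <= p^2 + q^2 <= ||a|X|^2 + ... + (1-b)|Y*|^2||.
   - Buzano's inequality, applied to Xx, Y*x and x, gives
     2pq = 2|<Xx,x><x,Y*x>| <= ||Xx|| ||Y*x|| + |<YXx,x>|, and
     2||Xx|| ||Y*x|| <= ||Xx||^2 + ||Y*x||^2 = <(|X|^2 + |Y*|^2)x,x>. *)

(* Real parts and moduli of complex numbers; the modulus [`|z|] of [z : R[i]]
   is itself a complex number, whose real part is the usual modulus. *)
Section ComplexModulus.
Variable R : realType.
Local Notation Re := (@complex.Re R).

Lemma Re_le (z w : R[i]) : z <= w -> Re z <= Re w.
Proof. by rewrite lecE => /andP[]. Qed.

Lemma Re_ge0 (z : R[i]) : 0 <= z -> 0 <= Re z.
Proof. exact: Re_le. Qed.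

Lemma ReD (z w : R[i]) : Re (z + w) = Re z + Re w.
Proof. by case: z; case: w. Qed.

Lemma ReJ (z : R[i]) : Re z^* = Re z.
Proof. by case: z. Qed.

Lemma conj_real (r : R) : (r%:C%C)^* = r%:C%C.
Proof. exact: conjc_real. Qed.

Lemma norm_Re_norm (z : R[i]) : `|z| = (Re `|z|)%:C%C.
Proof. by rewrite RRe_real // normr_real. Qed.

Lemma Re_norm_ge0 (z : R[i]) : 0 <= Re `|z|.
Proof. exact: Re_ge0. Qed.

Lemma Re_norm_real (r : R) : Re `|r%:C%C| = `|r|.
Proof. by rewrite normc_def /= expr0n /= addr0 sqrtr_sqr. Qed.

Lemma Re_normM (z w : R[i]) : Re `|z * w| = Re `|z| * Re `|w|.
Proof. by rewrite normrM (norm_Re_norm z) (norm_Re_norm w) -rmorphM. Qed.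

Lemma Re_le_Re_norm (z : R[i]) : Re z <= Re `|z|.
Proof. by apply: le_trans (ler_norm _) _; rewrite -lecR normc_ge_Re. Qed.

End ComplexModulus.

Section InnerProduct.
Variable R : realType.
Variable V : lmodType R[i].
Variable ip : V -> V -> R[i].
Hypothesis hip : is_inner_product ip.
Local Notation nrm := (ipnorm ip).
Local Notation Re := (@complex.Re R).

Lemma ipDl x y z : ip (x + y) z = ip x z + ip y z.
Proof. by case: hip => h _ _ _; have := h 1 x y z; rewrite scale1r mul1r. Qed.

Lemma ip0l z : ip 0 z = 0.
Proof. by apply: (addrI (ip 0 z)); rewrite -ipDl !addr0. Qed.

Lemma ipZl a x z : ip (a *: x) z = a * ip x z.
Proof. by case: hip => h _ _ _; have := h a x 0 z; rewrite addr0 ip0l addr0. Qed.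

Lemma ipBl x y z : ip (x - y) z = ip x z - ip y z.
Proof. by rewrite ipDl -scaleN1r ipZl mulN1r. Qed.

Lemma ipC x y : ip y x = (ip x y)^*.
Proof. by case: hip. Qed.

Lemma ipDr z x y : ip z (x + y) = ip z x + ip z y.
Proof. by rewrite ipC (ipC x) (ipC y) ipDl rmorphD. Qed.

Lemma ipZr z a x : ip z (a *: x) = a^* * ip z x.
Proof. by rewrite ipC (ipC x) ipZl rmorphM. Qed.

Lemma ipBr z x y : ip z (x - y) = ip z x - ip z y.
Proof. by rewrite ipC (ipC x) (ipC y) ipBl rmorphB. Qed.

Lemma ip0r z : ip z 0 = 0.
Proof. by rewrite ipC ip0l conjC0. Qed.

Lemma ipxx_ge0 x : 0 <= ip x x.
Proof. by case: hip. Qed.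

Lemma nrm_ge0 x : 0 <= nrm x.
Proof. exact: sqrtr_ge0. Qed.

Lemma ip_self x : ip x x = (nrm x ^+ 2)%:C%C.
Proof.
rewrite /ipnorm sqr_sqrtr; last exact: Re_ge0 (ipxx_ge0 x).
by rewrite RRe_real // ger0_real // ipxx_ge0.
Qed.

Lemma ip_unit x : nrm x = 1 -> ip x x = 1.
Proof. by move=> x1; rewrite ip_self x1 expr1n. Qed.

(* Cauchy-Schwarz, first as |<u,v>|^2 <= <u,u><v,v>, obtained from the
   positivity of <a u - t v, a u - t v> with t = <u,v> and a = <v,v>. *)
Lemma cauchy_schwarz_sqr u v : `|ip u v| ^+ 2 <= ip u u * ip v v.
Proof.
set t := ip u v; set a := ip v v.
have a_real : a^* = a by rewrite /a -ipC.
have expand : ip (a *: u - t *: v) (a *: u - t *: v)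
              = a * (a * ip u u - t * t^*).
  by rewrite ipBl !ipBr !ipZl !ipZr a_real -/t -/a (ipC u v) -/t; ring.
have := ipxx_ge0 (a *: u - t *: v); rewrite expand.
have [a0 _|a_neq0] := eqVneq a 0.
  have v0 : v = 0 by case: hip => _ _ _; apply.
  by rewrite a0 /t v0 ip0r normr0 expr0n /= mulr0.
have a_gt0 : 0 < a by rewrite lt_def a_neq0 ipxx_ge0.
by rewrite pmulr_rge0 // subr_ge0 normCK [_ * a]mulrC.
Qed.

Lemma cauchy_schwarz u v : Re `|ip u v| <= nrm u * nrm v.
Proof.
have := cauchy_schwarz_sqr u v.
rewrite norm_Re_norm !ip_self -!rmorphXn -rmorphM lecR -exprMn.
by rewrite ler_pXn2r // ?nnegrE ?mulr_ge0 ?nrm_ge0 ?Re_norm_ge0.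
Qed.

Lemma nrm_triangle u v : nrm (u + v) <= nrm u + nrm v.
Proof.
have expand : (nrm (u + v) ^+ 2)%:C%C
              = (nrm u ^+ 2)%:C%C + ip u v + (ip u v)^* + (nrm v ^+ 2)%:C%C.
  by rewrite -!ip_self ipDl !ipDr -(ipC u v) !addrA.
have := congr1 Re expand; rewrite /= !ReD ReJ /= => {}expand.
have cross := le_trans (Re_le_Re_norm (ip u v)) (cauchy_schwarz u v).
have := nrm_ge0 u; have := nrm_ge0 v; have := nrm_ge0 (u + v) => *.
rewrite -(@ler_pXn2r _ 2) // ?nnegrE ?addr_ge0 //; nra.
Qed.

Lemma nrmZ (r : R) v : 0 <= r -> nrm (r%:C%C *: v) = r * nrm v.
Proof.
move=> r_ge0; rewrite {1}/ipnorm ipZl ipZr conj_real ip_self -!rmorphM /=.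
by rewrite mulrA -expr2 -exprMn sqrtr_sqr ger0_norm // mulr_ge0 // nrm_ge0.
Qed.

(* The vector w = 2<u,x>x - u is
   the reflection of u through the line of x, so ||w|| = ||u||, and
   <w,v> = 2<u,x><x,v> - <u,v>; apply Cauchy-Schwarz to <w,v>. *)
Lemma buzano u v x : nrm x = 1 ->
  2 * Re `|ip u x * ip x v| <= nrm u * nrm v + Re `|ip u v|.
Proof.
move=> x1; set c := ip u x; set w := (2 * c) *: x - u.
have nrm_w : nrm w = nrm u.
  rewrite /ipnorm /w ipBl !ipBr !ipZl !ipZr ip_unit // (ipC u x) -/c.
  by rewrite rmorphM rmorph_nat; congr (Num.sqrt (Re _)); ring.
have ip_wv : ip w v = 2 * c * ip x v - ip u v by rewrite /w ipBl ipZl.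
have cs_w := cauchy_schwarz w v; rewrite nrm_w in cs_w.
have tri : `|2 * c * ip x v| <= `|ip w v| + `|ip u v|.
  by rewrite ip_wv -[X in `|X|](subrK (ip u v)) ler_normD.
have double : Re `|2 * c * ip x v| = 2 * Re `|c * ip x v|.
  by rewrite -mulrA normrM normr_nat !mulr_natl !mulr2n ReD.
have := Re_le tri; rewrite ReD double; lra.
Qed.

End InnerProduct.

Section BoundedOperators.
Variable R : realType.
Variable V : lmodType R[i].
Variable ip : V -> V -> R[i].
Hypothesis hip : is_inner_product ip.
Local Notation nrm := (ipnorm ip).
Local Notation Re := (@complex.Re R).

(* T is bounded with a nonnegative bound. *)
Definition bounded (T : V -> V) :=
  exists K, 0 <= K /\ forall v, nrm (T v) <= K * nrm v.

Lemma bounded_op T : is_bounded_op ip T -> bounded T.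
Proof.
case=> _ [M hM]; exists `|M|; split => // v.
by apply: le_trans (hM v) _; rewrite ler_wpM2r ?nrm_ge0 ?ler_norm.
Qed.

Lemma bounded_comp S T : bounded S -> bounded T -> bounded (fun v => S (T v)).
Proof.
case=> [KS [KS_ge0 hS]] [KT [KT_ge0 hT]]; exists (KS * KT).
split=> [|v]; first exact: mulr_ge0.
by apply: le_trans (hS _) _; rewrite -mulrA ler_wpM2l.
Qed.

Lemma bounded_add S T : bounded S -> bounded T -> bounded (fun v => S v + T v).
Proof.
case=> [KS [KS_ge0 hS]] [KT [KT_ge0 hT]]; exists (KS + KT).
split=> [|v]; first exact: addr_ge0.
by apply: le_trans (nrm_triangle hip _ _) _; rewrite mulrDl lerD.
Qed.

Lemma bounded_scale (r : R) T : 0 <= r -> bounded T ->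
  bounded (fun v => r%:C%C *: T v).
Proof.
move=> r_ge0 [K [K_ge0 hK]]; exists (r * K).
split=> [|v]; first exact: mulr_ge0.
by rewrite nrmZ // -mulrA ler_wpM2l.
Qed.

(* The adjoint of a bounded operator is bounded by the same constant:
   ||Ts y||^2 = <T Ts y, y> <= K ||Ts y|| ||y||. *)
Lemma bounded_adjoint T Ts : is_adjoint ip T Ts -> bounded T -> bounded Ts.
Proof.
move=> adj [K [K_ge0 hK]]; exists K; split => // y.
have sq : Re (ip (T (Ts y)) y) = nrm (Ts y) ^+ 2 by rewrite adj ip_self.
have cs := le_trans (Re_le_Re_norm _) (cauchy_schwarz hip (T (Ts y)) y).
rewrite sq in cs; have hKy := hK (Ts y).
have ny_ge0 : 0 <= nrm y := nrm_ge0 _ _.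
have nTs_ge0 : 0 <= nrm (Ts y) := nrm_ge0 _ _.
have Ky_ge0 : 0 <= K * nrm y by rewrite mulr_ge0 // nrm_ge0.
nra.
Qed.

Lemma quad_le_opnorm T x : bounded T -> nrm x = 1 ->
  Re `|ip (T x) x| <= opnorm ip T.
Proof.
case=> [K [K_ge0 hK]] x1.
apply: le_trans (cauchy_schwarz hip _ _) _; rewrite x1 mulr1.
apply: sup_upper_bound; last by exists x => //=; rewrite x1.
split; first by exists (nrm (T x)), x => //=; rewrite x1.
exists K => _ [v v1 <-]; apply: le_trans (hK v) _.
by rewrite -[leRHS]mulr1 ler_wpM2l.
Qed.

Lemma real_quad_le_opnorm T x (r : R) : bounded T -> nrm x = 1 ->
  ip (T x) x = r%:C%C -> r <= opnorm ip T.
Proof.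
move=> bT x1 Tx_r; have := quad_le_opnorm bT x1.
by rewrite Tx_r Re_norm_real; apply: le_trans; rewrite ler_norm.
Qed.

Lemma quad_le_numrad T x : bounded T -> nrm x = 1 ->
  Re `|ip (T x) x| <= numrad ip T.
Proof.
case=> [K [K_ge0 hK]] x1.
apply: sup_upper_bound; last by exists x.
split; first by exists (Re `|ip (T x) x|), x.
exists K => _ [v v1 <-]; apply: le_trans (cauchy_schwarz hip _ _) _.
by rewrite v1 mulr1; apply: le_trans (hK v) _; rewrite v1 mulr1.
Qed.

End BoundedOperators.

(* Quadratic forms of |T|^2 = Ts T and |Ts|^2 = T Ts for an adjoint pair. *)
Section AdjointPair.
Variable R : realType.
Variable V : lmodType R[i].
Variable ip : V -> V -> R[i].
Hypothesis hip : is_inner_product ip.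
Variables T Ts : V -> V.
Hypothesis adj : is_adjoint ip T Ts.
Local Notation nrm := (ipnorm ip).
Local Notation Re := (@complex.Re R).

Lemma quad_modulus_sqr x : ip (Ts (T x)) x = (nrm (T x) ^+ 2)%:C%C.
Proof. by rewrite ipC // -adj ip_self // conj_real. Qed.

Lemma quad_comodulus_sqr x : ip (T (Ts x)) x = (nrm (Ts x) ^+ 2)%:C%C.
Proof. by rewrite adj ip_self. Qed.

(* |<Tx,x>| is bounded both by ||Tx|| and by ||Ts x||, hence its square by
   any convex combination of ||Tx||^2 and ||Ts x||^2. *)
Lemma quad_sqr_le_mixed x (a : R) : nrm x = 1 -> 0 <= a <= 1 ->
  Re `|ip (T x) x| ^+ 2 <= a * nrm (T x) ^+ 2 + (1 - a) * nrm (Ts x) ^+ 2.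
Proof.
move=> x1 /andP[a_ge0 a_le1]; set p := Re `|ip (T x) x|.
have p_ge0 : 0 <= p := Re_norm_ge0 _.
have le_T : p <= nrm (T x) by have := cauchy_schwarz hip (T x) x; rewrite x1 mulr1.
have le_Ts : p <= nrm (Ts x).
  by have := cauchy_schwarz hip x (Ts x); rewrite x1 mul1r -adj.
have sq_T : p ^+ 2 <= nrm (T x) ^+ 2 by rewrite ler_pXn2r ?nnegrE ?nrm_ge0.
have sq_Ts : p ^+ 2 <= nrm (Ts x) ^+ 2 by rewrite ler_pXn2r ?nnegrE ?nrm_ge0.
have part_T : 0 <= a * (nrm (T x) ^+ 2 - p ^+ 2) by rewrite mulr_ge0 ?subr_ge0.
have part_Ts : 0 <= (1 - a) * (nrm (Ts x) ^+ 2 - p ^+ 2).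
  by rewrite mulr_ge0 ?subr_ge0.
rewrite !mulrBr in part_T part_Ts; lra.
Qed.

End AdjointPair.

Section TwoAdjointPairs.
Variable R : realType.
Variable V : lmodType R[i].
Variable ip : V -> V -> R[i].
Hypothesis hip : is_inner_product ip.
Variables X Xs Y Ys : V -> V.
Hypotheses (adjX : is_adjoint ip X Xs) (adjY : is_adjoint ip Y Ys).
Hypotheses (bX : bounded ip X) (bY : bounded ip Y).
Local Notation nrm := (ipnorm ip).
Local Notation Re := (@complex.Re R).

Lemma quad_sqr_sum_le_opnorm (alpha beta : R) x :
  0 <= alpha <= 1 -> 0 <= beta <= 1 -> nrm x = 1 ->
  Re `|ip (X x) x| ^+ 2 + Re `|ip (Y x) x| ^+ 2
  <= opnorm ip (fun v => alpha%:C%C *: Xs (X v) + (1 - alpha)%:C%C *: X (Xs v)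
                         + beta%:C%C *: Ys (Y v) + (1 - beta)%:C%C *: Y (Ys v)).
Proof.
move=> ha hb x1; have [a_ge0 a_le1] := andP ha; have [b_ge0 b_le1] := andP hb.
have a'_ge0 : 0 <= 1 - alpha by rewrite subr_ge0.
have b'_ge0 : 0 <= 1 - beta by rewrite subr_ge0.
have bXs := bounded_adjoint hip adjX bX; have bYs := bounded_adjoint hip adjY bY.
pose mix := alpha * nrm (X x) ^+ 2 + (1 - alpha) * nrm (Xs x) ^+ 2
            + (beta * nrm (Y x) ^+ 2 + (1 - beta) * nrm (Ys x) ^+ 2).
apply: (@le_trans _ _ mix).
  by rewrite lerD ?quad_sqr_le_mixed.
apply: (real_quad_le_opnorm hip _ x1).
  exact: (bounded_add hip (bounded_add hip (bounded_add hip
    (bounded_scale hip a_ge0 (bounded_comp bXs bX))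
    (bounded_scale hip a'_ge0 (bounded_comp bX bXs)))
    (bounded_scale hip b_ge0 (bounded_comp bYs bY)))
    (bounded_scale hip b'_ge0 (bounded_comp bY bYs))).
rewrite !(ipDl hip) !(ipZl hip).
rewrite !(quad_modulus_sqr hip adjX, quad_comodulus_sqr hip adjX).
rewrite !(quad_modulus_sqr hip adjY, quad_comodulus_sqr hip adjY).
by rewrite -!rmorphM -!rmorphD /mix !addrA.
Qed.

(* ||Xx||^2 + ||Y*x||^2 = <(|X|^2 + |Y*|^2)x,x> <= || |X|^2 + |Y*|^2 ||. *)
Lemma nrm_sqr_sum_le_opnorm x : nrm x = 1 ->
  nrm (X x) ^+ 2 + nrm (Ys x) ^+ 2 <= opnorm ip (fun v => Xs (X v) + Y (Ys v)).
Proof.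
move=> x1; have bYs := bounded_adjoint hip adjY bY.
have bXs := bounded_adjoint hip adjX bX.
apply: (real_quad_le_opnorm hip _ x1).
  exact: (bounded_add hip (bounded_comp bXs bX) (bounded_comp bY bYs)).
by rewrite (ipDl hip) (quad_modulus_sqr hip adjX) (quad_comodulus_sqr hip adjY) -rmorphD.
Qed.

End TwoAdjointPairs.

Local Open Scope complex_scope.

Theorem mainTheorem3 (R : realType) (V : lmodType R[i]) (ip : V -> V -> R[i])
  (X Xs Y Ys : V -> V) (alpha beta : R) :
  is_hilbert ip ->
  is_bounded_op ip X -> is_bounded_op ip Y ->
  is_adjoint ip X Xs -> is_adjoint ip Y Ys ->
  0 <= alpha <= 1 -> 0 <= beta <= 1 ->
  forall x : V, ipnorm ip x = 1 ->
    complex.Re `|ip (X x) x * ip (Y x) x|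
    <= 4^-1 * opnorm ip (fun v => alpha%:C *: Xs (X v) + (1 - alpha)%:C *: X (Xs v)
                                  + beta%:C *: Ys (Y v) + (1 - beta)%:C *: Y (Ys v))
       + 8^-1 * opnorm ip (fun v => Xs (X v) + Y (Ys v))
       + 4^-1 * numrad ip (fun v => Y (X v)).
Proof.
move=> [hip _] hX hY adjX adjY ha hb x x1.
have [bX bY] := (bounded_op hX, bounded_op hY).
have mixed := quad_sqr_sum_le_opnorm hip adjX adjY bX bY ha hb x1.
have sum := nrm_sqr_sum_le_opnorm hip adjX adjY bX bY x1.
have radius := quad_le_numrad hip (bounded_comp bY bX) x1.
(* Buzano with u = Xx, v = Y*x: <Xx,Y*x> = <YXx,x> and <x,Y*x> = <Yx,x>. *)
have buz := buzano hip (X x) (Ys x) x1; rewrite -!adjY in buz.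
rewrite Re_normM in buz *.
have := sqr_ge0 (complex.Re `|ip (X x) x| - complex.Re `|ip (Y x) x|).
have := sqr_ge0 (ipnorm ip (X x) - ipnorm ip (Ys x)).
nra.
Qed.
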